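(* Fix integers $m\ge1$ and $\theta\in(0,1]$, and let $f$ be a homogeneous voting rule. Suppose there exist $\delta>0$ and a neighborhood $U$ of the expected normalized profile $\hat P$ (among normalized continuous profiles on $\{1,\dots,m\}$, with the topology of weight vectors in $\mathbb R^{m!}$) such that $f$ is $\delta$-stable-CM in every continuous profile of $U$. Then $\lim_{n\to\infty}\rho(f,m,n,\theta)=1$.
   Context: A ranking is a strict total order on the candidates. A discrete profile $P$ consists of candidates, a voter set of size $n$ and a ranking $P_v$ per voter; $w(p,P)$ is the number of voters with ranking $p$. A continuous profile consists of candidates, total weight $w(P)>0$ and weights $w(p,P)\ge0$ summing to $w(P)$. The normalized profile $\bar P$ has weights $w(p,P)/w(P)$. A voting rule maps every profile (discrete or continuous) to one of its candidates; homogeneous means $f(P)=f(\bar P)$ for all $P$. For continuous profiles $Q,Q'$ on the same candidates, $d(Q,Q')=\max_p|w(p,Q)-w(p,Q')|$. CM (discrete): $f$ is CM in discrete $P$ if there is a discrete $Q$ with the same candidates and voters, $f(Q)\ne f(P)$, and every voter $v$ with $Q_v\ne P_v$ prefers $f(Q)$ to $f(P)$ according to $P_v$. CM from continuous $P$ to continuous $Q$: $Q$ has the same candidates and total weight as $P$, $f(Q)\ne f(P)$, and every ranking $p$ with $w(p,Q)<w(p,P)$ prefers $f(Q)$ to $f(P)$. $\delta$-stable-CM: $f$ is $\delta$-stable-CM in a continuous profile $P$ if there is a continuous profile $Q$ such that $f$ is CM from $P$ to $Q$ and $f(Q')=f(Q)$ for every continuous profile $Q'$ with $d(Q,Q')<\delta$.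 Perturbed Culture ($m,n\ge1$, $\theta\in(0,1]$): random discrete profile with candidates $\{1,\dots,m\}$, voters $\{1,\dots,n\}$, each voter independently having ranking $1\succ\cdots\succ m$ with probability $\theta$ and a uniformly random ranking with probability $1-\theta$. $\hat P$: total weight $1$, weight $\theta+\frac{1-\theta}{m!}$ on $1\succ\cdots\succ m$ and $\frac{1-\theta}{m!}$ on each other ranking. $\rho(f,m,n,\theta)$: probability that $f$ is CM in the random profile. *)

From HB Require Import structures.
From mathcomp Require Import all_boot all_order all_algebra all_fingroup.
From mathcomp Require Import all_classical all_reals all_analysis.
Set Implicit Arguments. Unset Strict Implicit. Unset Printing Implicit Defensive.
Import Order.TTheory GRing.Theory Num.Theory.
Local Open Scope ring_scope.

(* Candidates are 'I_m (candidate i of the paper is the ordinal i-1).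
   A ranking is a permutation p of 'I_m, read as: p a is the position of
   candidate a (position 0 = most preferred).  The identity permutation is
   the ranking 1 > 2 > ... > m. *)
Definition ranking (m : nat) := {perm 'I_m}.

Definition prefers (m : nat) (p : ranking m) (a b : 'I_m) : bool :=
  (p a < p b)%N.

Definition cprofile (R : realType) (m : nat) := {ffun ranking m -> R}.

Definition total_weight (R : realType) m (w : cprofile R m) : R :=
  \sum_(p : ranking m) w p.

Definition is_cprofile (R : realType) m (w : cprofile R m) : Prop :=
  (forall p, 0 <= w p) /\ 0 < total_weight w.

Definition normalize (R : realType) m (w : cprofile R m) : cprofile R m :=
  [ffun p => w p / total_weight w].

Definition pdist (R : realType) m (w w' : cprofile R m) : R :=
  \big[Num.max/0]_(p : ranking m) `|w p - w' p|.

Definition dprofile (m n : nat) := {ffun 'I_n -> ranking m}.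

Definition counts (R : realType) m n (P : dprofile m n) : cprofile R m :=
  [ffun p => (#|[set v | P v == p]|)%:R].

Record voting_rule (R : realType) (m : nat) := VotingRule {
  vr_disc : forall n : nat, dprofile m n -> 'I_m;
  vr_cont : cprofile R m -> 'I_m }.

Definition homogeneous (R : realType) m (f : voting_rule R m) : Prop :=
  (forall n (P : dprofile m n), (0 < n)%N ->
      vr_disc f P = vr_cont f (normalize (counts R P))) /\
  (forall w : cprofile R m, is_cprofile w ->
      vr_cont f w = vr_cont f (normalize w)).

Definition CM_disc (R : realType) m (f : voting_rule R m) n (P : dprofile m n)
  : bool :=
  [exists Q : dprofile m n,
     (vr_disc f Q != vr_disc f P) &&
     [forall v : 'I_n, (Q v != P v) ==> prefers (P v) (vr_disc f Q) (vr_disc f P)]].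

Definition CM_cont (R : realType) m (f : voting_rule R m) (P Q : cprofile R m)
  : Prop :=
  is_cprofile P /\ is_cprofile Q /\
  total_weight Q = total_weight P /\
  vr_cont f Q != vr_cont f P /\
  (forall p, Q p < P p -> prefers p (vr_cont f Q) (vr_cont f P)).

Definition stable_CM (R : realType) m (f : voting_rule R m) (delta : R)
  (P : cprofile R m) : Prop :=
  exists Q : cprofile R m, CM_cont f P Q /\
    forall Q' : cprofile R m, is_cprofile Q' -> pdist Q Q' < delta ->
      vr_cont f Q' = vr_cont f Q.

Definition Phat (R : realType) (m : nat) (theta : R) : cprofile R m :=
  [ffun p => theta * (p == 1%g)%:R + (1 - theta) / (m`!)%:R].

Definition pc_prob (R : realType) m n (theta : R) (P : dprofile m n) : R :=
  \prod_(v : 'I_n) (theta * (P v == 1%g)%:R + (1 - theta) / (m`!)%:R).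

Definition rho (R : realType) m (f : voting_rule R m) (n : nat) (theta : R) : R :=
  \sum_(P : dprofile m n) pc_prob theta P * (CM_disc f P)%:R.

From HB Require Import structures.
From mathcomp Require Import all_boot all_order all_algebra all_fingroup.
From mathcomp Require Import all_classical all_reals all_analysis.
From mathcomp Require Import zify ring lra.
Import Order.TTheory GRing.Theory Num.Theory.
Import numFieldNormedType.Exports.

Set Implicit Arguments. Unset Strict Implicit. Unset Printing Implicit Defensive.

(* By Chebyshev's inequality, with probability [1 - O(1/n)] the normalized
   sampled profile lies within [eps] of [Phat], so it admits a [delta]-stable
   manipulation towards some continuous [Q].  Rounding [n Q] to integers with
   the same total moves each coordinate by at most [m!], so once [m!/n < delta]
   the rounded profile still elects [f Q]; and it is reached from the sampled
   profile by moving only voters whose ranking [Q] underweights, all of whom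
   prefer [f Q].  Hence [rho >= 1 - O(1/n)]. *)

Section Reassignment.
Variables (T : finType) (n : nat).
Implicit Types (P : {ffun 'I_n -> T}) (t : T -> nat).

Definition cnt P (x : T) : nat := #|[set v | P v == x]|.

Lemma cntE P x : cnt P x = \sum_v (P v == x).
Proof.
rewrite /cnt -sum1_card big_mkcond /=.
by apply: eq_bigr => v _; rewrite inE; case: eqP.
Qed.

Lemma sum_cnt P : \sum_x cnt P x = n.
Proof.
under eq_bigr do rewrite cntE.
rewrite exchange_big /= -[n in RHS]card_ord -sum1_card.
apply: eq_bigr => v _; rewrite (bigD1 (P v)) //= eqxx big1 ?addn0 // => x.
by rewrite eq_sym => /negPf ->.
Qed.

Lemma cnt_set P v (p : T) x :
  cnt [ffun u => if u == v then p else P u] x + (P v == x) = cnt P x + (p == x).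
Proof.
rewrite !cntE (bigD1 v) //= [in RHS](bigD1 v) //= ffunE eqxx.
under eq_bigr => u /negPf uv do rewrite ffunE uv.
lia.
Qed.

Lemma eq_sum_leq (a b : T -> nat) :
  \sum_x a x = \sum_x b x -> (forall x, a x <= b x) -> a =1 b.
Proof.
move=> eq_ab le_ab x; apply/eqP; rewrite eqn_leq le_ab /=.
have /eqP : \sum_y (b y - a y) = 0 by rewrite sumnB // eq_ab subnn.
by rewrite sum_nat_eq0 => /forallP /(_ x); rewrite subn_eq0.
Qed.

Definition excess P t := \sum_x (cnt P x - t x).

Lemma excess0_cnt P t : \sum_x t x = n -> excess P t = 0 -> forall x, cnt P x = t x.
Proof.
move=> sum_t /eqP; rewrite sum_nat_eq0 => /forallP le_t.
apply: eq_sum_leq => [|x]; first by rewrite sum_cnt.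
by rewrite -subn_eq0 (implyP (le_t x)).
Qed.

Lemma excess_step P t : \sum_x t x = n -> 0 < excess P t ->
  exists v p', [/\ t (P v) < cnt P (P v), cnt P p' < t p' &
    excess [ffun u => if u == v then p' else P u] t < excess P t].
Proof.
move=> sum_t pos_excess.
have [p cnt_p] : exists p, t p < cnt P p.
  apply/existsP; apply: contraLR pos_excess; rewrite negb_exists => /forallP le_t.
  by rewrite -leqNgt leqn0 sum_nat_eq0; apply/forallP => x; rewrite subn_eq0 leqNgt le_t.
have [p' cnt_p'] : exists p', cnt P p' < t p'.
  apply/existsP; apply: contraLR cnt_p; rewrite negb_exists -leqNgt => /forallP ge_t.
  rewrite (@eq_sum_leq t (cnt P)) ?sum_cnt // => x.
  by rewrite leqNgt ge_t.
have /card_gt0P [v] : (0 < cnt P p)%N by apply: leq_ltn_trans cnt_p.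
rewrite inE => /eqP Pv.
have pp' : p != p' by apply: contraTneq cnt_p' => <-; rewrite -leqNgt ltnW.
exists v, p'; rewrite Pv; split => //.
pose P' := [ffun u => if u == v then p' else P u].
have cnt_P' x := cnt_set P v p' x; rewrite Pv in cnt_P'.
rewrite /excess (bigD1 p) //= [ltnRHS](bigD1 p) //= -addSn leq_add //.
  by move: (cnt_P' p); rewrite eqxx eq_sym (negPf pp') /=; lia.
apply: leq_sum => x _; move: (cnt_P' x).
by case: (eqVneq p' x) => [<-|_]; case: (p == x) => /=; lia.
Qed.

Lemma reassign_to_counts P t (S : pred T) : \sum_x t x = n ->
  (forall x, ~~ S x -> cnt P x <= t x) ->
  exists Q : {ffun 'I_n -> T},
    (forall x, cnt Q x = t x) /\ (forall v, Q v != P v -> S (P v)).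
Proof.
move=> sum_t.
suff reach k P' : excess P' t <= k -> (forall x, ~~ S x -> cnt P' x <= t x) ->
    (forall v, P' v != P v -> S (P v)) ->
  exists Q : {ffun 'I_n -> T},
    (forall x, cnt Q x = t x) /\ (forall v, Q v != P v -> S (P v)).
  by move=> le_t; apply: (reach _ P (leqnn _)) => // v; rewrite eqxx.
elim: k P' => [|k IHk] P' le_k le_t moved.
  by exists P'; split => //; apply: excess0_cnt sum_t _; move: le_k; rewrite leqn0 => /eqP.
have [/(excess0_cnt sum_t) cnt_t|excess_gt0] := posnP (excess P' t); first by exists P'.
have [v [p' [over under lt_excess]]] := excess_step sum_t excess_gt0.
have S_v : S (P' v) by apply: contraLR over; rewrite -leqNgt => /le_t.
apply: IHk.
- by rewrite -ltnS; exact: leq_trans lt_excess le_k.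
- move=> x notSx; move: (cnt_set P' v p' x) (le_t x notSx).
  case: (eqVneq p' x) => [<-|_]; first by lia.
  by case: (P' v == x) => /=; lia.
- move=> u; rewrite ffunE; case: (eqVneq u v) => [->|_ /moved //] _.
  by case: (eqVneq (P' v) (P v)) => [<- //|/moved].
Qed.

End Reassignment.

Local Open Scope ring_scope.

(* Round every coordinate down except one, which absorbs the deficit. *)
Lemma round_to_nat_sum (R : archiRealFieldType) (T : finType) (a : T -> R) (n : nat) :
  (forall x, 0 <= a x) -> \sum_x a x = n%:R ->
  exists t : T -> nat, [/\ (\sum_x t x = n)%N,
    forall x (k : nat), k%:R <= a x -> (k <= t x)%N &
    forall x, `|a x - (t x)%:R| <= #|T|%:R].
Proof.
move=> a_ge0 sum_a.
case: (pickP (fun _ : T => true)) => [x0 _|T0]; last first.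
  have n0 : n = 0%N by apply/eqP; rewrite -(eqr_nat R) -sum_a big_pred0.
  by exists (fun=> 0%N); split => [|x|x]; rewrite ?big_pred0 //; have := T0 x.
pose fl x := Num.trunc (a x).
have fl_le x : (fl x)%:R <= a x by rewrite truncn_le.
have fl_gt x : a x < (fl x)%:R + 1 by rewrite natr1 truncnS_gt.
pose s := (\sum_(y | y != x0) fl y)%N.
have sum_rest : \sum_(y | y != x0) a y = n%:R - a x0.
  by rewrite -sum_a [in RHS](bigD1 x0) //= addrAC subrr add0r.
have s_le : s%:R <= n%:R - a x0 by rewrite natr_sum -sum_rest ler_sum.
have s_leq : (s <= n)%N by rewrite -(ler_nat R) (le_trans s_le) // gerBl.
pose t x := if x == x0 then (n - s)%N else fl x.
exists t; split.
- by rewrite (bigD1 x0) //= (eq_bigr fl) => [|y /negPf y0]; rewrite /t ?eqxx ?subnK ?y0.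
- move=> x k le_k; rewrite /t; case: eqP => [x_x0|_]; last by rewrite truncn_ge_nat.
  by rewrite -(ler_nat R) natrB //; rewrite x_x0 in le_k; lra.
have dist_fl y : `|(fl y)%:R - a y| <= 1.
  by rewrite ler_norml; move: (fl_le y) (fl_gt y); lra.
move=> x; rewrite /t; case: eqP => [->|_]; last first.
  by rewrite distrC (le_trans (dist_fl x)) // ler1n; apply/card_gt0P; exists x0.
have -> : a x0 - (n - s)%:R = \sum_(y | y != x0) ((fl y)%:R - a y).
  by rewrite natrB // sumrB -natr_sum sum_rest; lra.
apply: le_trans (ler_norm_sum _ _ _) _.
rewrite big_mkcond /= -sum1_card natr_sum; apply: ler_sum => y _.
by case: ifP => // _; apply: dist_fl.
Qed.

Section ProductDistribution.
Variables (R : realFieldType) (T : finType) (q : T -> R) (n : nat).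
Hypothesis q_ge0 : forall x, 0 <= q x.
Hypothesis sum_q : \sum_x q x = 1.
Implicit Types (P : {ffun 'I_n -> T}) (g k : T -> R).

Definition pweight P : R := \prod_v q (P v).

Lemma pweight_ge0 P : 0 <= pweight P.
Proof. by apply: prodr_ge0 => v _. Qed.

Lemma sum_pweightM (h : 'I_n -> T -> R) :
  \sum_P pweight P * \prod_v h v (P v) = \prod_v \sum_x q x * h v x.
Proof. by rewrite bigA_distr_bigA /=; apply: eq_bigr => P _; rewrite -big_split. Qed.

Let sum_qM1 : \sum_x q x * 1 = 1.
Proof. by under eq_bigr do rewrite mulr1. Qed.

Lemma sum_pweight : \sum_P pweight P = 1.
Proof.
transitivity (\prod_(v < n) \sum_x q x * 1); last by rewrite big1.
rewrite -(sum_pweightM (fun _ _ => 1)).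
by apply: eq_bigr => P _; rewrite big1 ?mulr1.
Qed.

Lemma sum_pweight_coord u g :
  \sum_P pweight P * g (P u) = \sum_x q x * g x.
Proof.
pose h v x := if v == u then g x else 1.
transitivity (\prod_v \sum_x q x * h v x).
  rewrite -sum_pweightM; apply: eq_bigr => P _.
  by rewrite (bigD1 u) //= /h eqxx big1 ?mulr1 // => v /negPf ->.
by rewrite (bigD1 u) //= /h eqxx [X in _ * X]big1 ?mulr1 // => v /negPf ->.
Qed.

Lemma sum_pweight_coord2 u w g k : u != w ->
  \sum_P pweight P * (g (P u) * k (P w)) = (\sum_x q x * g x) * (\sum_x q x * k x).
Proof.
move=> uw; have wu : w != u by rewrite eq_sym.
pose h v x := if v == u then g x else if v == w then k x else 1.
have h_rest v x : (v != u) && (v != w) -> h v x = 1.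
  by case/andP => /negPf vu /negPf vw; rewrite /h vu vw.
have h_u x : h u x = g x by rewrite /h eqxx.
have h_w x : h w x = k x by rewrite /h (negPf wu) eqxx.
transitivity (\prod_v \sum_x q x * h v x).
  rewrite -sum_pweightM; apply: eq_bigr => P _.
  rewrite (bigD1 u) // (bigD1 w) //= h_u h_w.
  by rewrite big1 ?mulr1 // => v /h_rest.
rewrite (bigD1 u) // (bigD1 w) //=.
under eq_bigr do rewrite h_u; under [X in _ * (X * _)]eq_bigr do rewrite h_w.
rewrite [X in _ * (_ * X)]big1 ?mulr1 // => v vuw.
by under eq_bigr do rewrite h_rest //.
Qed.

Section Deviation.
Variable p : T.

Definition deviation P : R := (cnt P p)%:R - n%:R * q p.

Let centered x : R := (x == p)%:R - q p.

Let deviationE P : deviation P = \sum_v centered (P v).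
Proof. by rewrite /deviation sumrB sumr_const card_ord cntE natr_sum mulr_natl. Qed.

Let mean_centered : \sum_x q x * centered x = 0.
Proof.
under eq_bigr do rewrite mulrBr.
rewrite sumrB -big_distrl /= sum_q mul1r (bigD1 p) //= eqxx mulr1 big1 ?addr0 ?subrr //.
by move=> x /negPf ->; rewrite mulr0.
Qed.

Let var_centered : \sum_x q x * (centered x * centered x) <= 1.
Proof.
have q_le1 : q p <= 1 by rewrite -sum_q (bigD1 p) //= lerDl sumr_ge0.
rewrite -sum_q; apply: ler_sum => x _; rewrite -[leRHS]mulr1 ler_wpM2l //.
by move: (q_ge0 p) q_le1; rewrite /centered; case: (x == p) => /=; nra.
Qed.

(* The summands of [deviation] are independent and centered, so only the
   diagonal terms of its square survive. *)
Lemma second_moment_deviation : \sum_P pweight P * deviation P ^+ 2 <= n%:R.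
Proof.
have -> : \sum_P pweight P * deviation P ^+ 2 =
    \sum_u \sum_w \sum_P pweight P * (centered (P u) * centered (P w)).
  under [RHS]eq_bigr do rewrite exchange_big /=.
  rewrite exchange_big /=; apply: eq_bigr => P _.
  rewrite deviationE expr2 mulr_suml mulr_sumr; apply: eq_bigr => u _.
  by rewrite mulr_sumr mulr_sumr; apply: eq_bigr => w _; rewrite mulrA.
rewrite -[n in leRHS]card_ord -sumr_const; apply: ler_sum => u _.
rewrite (bigD1 u) //= [X in _ + X]big1 ?addr0 => [|w wu]; last first.
  by rewrite (sum_pweight_coord2 centered centered) 1?eq_sym // mean_centered mul0r.
by rewrite (sum_pweight_coord u (fun x => centered x * centered x)).
Qed.

End Deviation.

(* Chebyshev's inequality for each count, combined by a union bound over [T]. *)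
Lemma pweight_far_le (B : pred {ffun 'I_n -> T}) (c : R) : 0 < c ->
  (forall P, B P -> exists p, c <= `|deviation p P|) ->
  \sum_(P | B P) pweight P <= #|T|%:R * n%:R / c ^+ 2.
Proof.
move=> c_gt0 far.
have c2_gt0 : 0 < c ^+ 2 by rewrite exprn_gt0.
apply: (@le_trans _ _ (\sum_P pweight P * \sum_p deviation p P ^+ 2 / c ^+ 2)).
  rewrite big_mkcond /=; apply: ler_sum => P _.
  have sum_ge0 : 0 <= \sum_p deviation p P ^+ 2 / c ^+ 2.
    by apply: sumr_ge0 => p _; rewrite divr_ge0 ?sqr_ge0 ?ltW.
  case: ifP => [/far [p le_c]|_]; last by rewrite mulr_ge0 ?pweight_ge0.
  rewrite -[leLHS]mulr1 ler_wpM2l ?pweight_ge0 // (bigD1 p) //=.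
  suff : 1 <= deviation p P ^+ 2 / c ^+ 2.
    by move/le_trans; apply; rewrite lerDl sumr_ge0 // => p' _; rewrite divr_ge0 ?sqr_ge0 ?ltW.
  rewrite ler_pdivlMr // mul1r -[deviation p P ^+ 2]real_normK ?num_real //.
  by apply: lerXn2r => //; rewrite nnegrE ?normr_ge0 ?(ltW c_gt0).
under eq_bigr do rewrite mulr_sumr.
rewrite exchange_big /= -mulrA mulr_natl -sumr_const; apply: ler_sum => p _.
under eq_bigr do rewrite mulrA.
by rewrite -mulr_suml ler_wpM2r ?second_moment_deviation // invr_ge0 ltW.
Qed.

End ProductDistribution.

Section CountProfiles.
Variables (R : realType) (m n : nat).
Implicit Types (P : dprofile m n) (w : cprofile R m).

Lemma countsE P p : counts R P p = (cnt P p)%:R.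
Proof. by rewrite ffunE. Qed.

Lemma total_weight_counts P : total_weight (counts R P) = n%:R.
Proof. by rewrite /total_weight; under eq_bigr do rewrite countsE; rewrite -natr_sum sum_cnt. Qed.

Lemma normalize_countsE P p : normalize (counts R P) p = (cnt P p)%:R / n%:R.
Proof. by rewrite ffunE total_weight_counts countsE. Qed.

Hypothesis n_gt0 : (0 < n)%N.

Lemma total_weight_normalize_counts P : total_weight (normalize (counts R P)) = 1.
Proof.
rewrite /total_weight; under eq_bigr do rewrite normalize_countsE.
by rewrite -mulr_suml -natr_sum sum_cnt divff // pnatr_eq0 -lt0n.
Qed.

Lemma is_cprofile_normalize_counts P : is_cprofile (normalize (counts R P)).
Proof.
split=> [p|]; first by rewrite normalize_countsE divr_ge0.
by rewrite total_weight_normalize_counts.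
Qed.

Lemma dist_normalize_counts w P p :
  `|w p - normalize (counts R P) p| = `|n%:R * w p - (cnt P p)%:R| / n%:R.
Proof.
have n_neq0 : n%:R != 0 :> R by rewrite pnatr_eq0 -lt0n.
rewrite normalize_countsE (_ : w p - _ = (n%:R * w p - (cnt P p)%:R) / n%:R).
  by rewrite normrM normfV normr_nat.
by field.
Qed.

End CountProfiles.

Lemma pdist_lt (R : realType) m (w w' : cprofile R m) (e : R) :
  0 < e -> (forall p, `|w p - w' p| < e) -> pdist w w' < e.
Proof. by move=> e_gt0 lt_e; apply: bigmax_lt. Qed.

Lemma CM_disc_of_stable_CM (R : realType) m n (f : voting_rule R m) (delta : R)
    (P : dprofile m n) :
  (0 < n)%N -> homogeneous f -> #|ranking m|%:R < n%:R * delta ->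
  stable_CM f delta (normalize (counts R P)) -> CM_disc f P.
Proof.
move=> n_gt0 [hom_disc _] lt_delta [Q [[_ [[Q_ge0 _] [tw_Q [neq_fQ pref_Q]]]] stable_Q]].
set w := normalize (counts R P) in tw_Q neq_fQ pref_Q stable_Q.
have n_pos : (0 : R) < n%:R by rewrite ltr0n.
have sum_nQ : \sum_p n%:R * Q p = n%:R.
  by rewrite -mulr_sumr -[\sum_p Q p]/(total_weight Q) tw_Q total_weight_normalize_counts ?mulr1.
have [t [sum_t floor_t dist_t]] := round_to_nat_sum (fun p => mulr_ge0 (ler0n _ n) (Q_ge0 p)) sum_nQ.
have le_t p : ~~ (Q p < w p) -> (cnt P p <= t p)%N.
  rewrite -leNgt => le_wQ; apply: floor_t.
  have -> : (cnt P p)%:R = n%:R * w p.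
    by rewrite normalize_countsE mulrC divfK ?lt0r_neq0.
  by rewrite ler_pM2l.
have [Pd [cnt_Pd moved]] := reassign_to_counts sum_t le_t.
have f_Pd : vr_cont f (normalize (counts R Pd)) = vr_cont f Q.
  apply: stable_Q; first exact: is_cprofile_normalize_counts.
  apply: pdist_lt => [|p]; first by rewrite -(ltr_pM2l n_pos) mulr0 (le_lt_trans _ lt_delta).
  rewrite dist_normalize_counts // cnt_Pd ltr_pdivrMr // [delta * _]mulrC.
  exact: le_lt_trans (dist_t p) lt_delta.
apply/existsP; exists Pd; rewrite !hom_disc // f_Pd neq_fQ /=.
by apply/forallP => v; apply/implyP => /moved /pref_Q.
Qed.

Section PerturbedCulture.
Variables (R : realType) (m : nat) (theta : R).
Hypothesis theta01 : 0 <= theta <= 1.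

Lemma Phat_ge0 p : 0 <= Phat m theta p.
Proof.
have [theta_ge0 theta_le1] := andP theta01.
by rewrite ffunE addr_ge0 ?mulr_ge0 ?divr_ge0 ?subr_ge0.
Qed.

Lemma sum_Phat : \sum_p Phat m theta p = 1.
Proof.
under eq_bigr do rewrite ffunE.
rewrite big_split /= (bigD1 1%g) //= eqxx mulr1 big1 => [|p /negPf ->]; last by rewrite mulr0.
rewrite addr0 sumr_const card_Sn -[_ *+ m`!]mulr_natr divfK; first by rewrite addrC subrK.
by rewrite pnatr_eq0 -lt0n fact_gt0.
Qed.

Lemma pc_probE n (P : dprofile m n) : pc_prob theta P = pweight (Phat m theta) P.
Proof. by apply: eq_bigr => v _; rewrite ffunE. Qed.

Lemma rho_le1 (f : voting_rule R m) n : rho f n theta <= 1.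
Proof.
rewrite /rho -[leRHS](sum_pweight n sum_Phat); apply: ler_sum => P _.
by rewrite pc_probE ler_piMr ?(pweight_ge0 Phat_ge0) //; case: (CM_disc f P); rewrite ?ler01 ?lexx.
Qed.

Lemma one_sub_rho (f : voting_rule R m) n :
  1 - rho f n theta = \sum_(P : dprofile m n | ~~ CM_disc f P) pc_prob theta P.
Proof.
rewrite -[X in X - _](sum_pweight n sum_Phat) /rho -sumrB [RHS]big_mkcond /=.
by apply: eq_bigr => P _; rewrite pc_probE; case: (CM_disc f P); rewrite ?mulr1 ?mulr0 ?subrr ?subr0.
Qed.

Lemma one_sub_rho_le (f : voting_rule R m) n (eps : R) : (0 < n)%N -> 0 < eps ->
  (forall P : dprofile m n, pdist (normalize (counts R P)) (Phat m theta) < eps -> CM_disc f P) ->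
  1 - rho f n theta <= #|ranking m|%:R / (n%:R * eps ^+ 2).
Proof.
move=> n_gt0 eps_gt0 CM_near.
have n_pos : (0 : R) < n%:R by rewrite ltr0n.
rewrite one_sub_rho; under eq_bigr do rewrite pc_probE.
rewrite (_ : _ / _ = #|ranking m|%:R * n%:R / (n%:R * eps) ^+ 2); last first.
  by field; rewrite ?lt0r_neq0.
apply: (pweight_far_le Phat_ge0 sum_Phat) => [|P notCM]; first by rewrite mulr_gt0.
apply/existsP; apply: contraNT notCM; rewrite negb_exists => /forallP near_eps.
apply/CM_near/pdist_lt => // p; rewrite distrC dist_normalize_counts // distrC.
by rewrite ltr_pdivrMr // [eps * _]mulrC ltNge near_eps.
Qed.

End PerturbedCulture.

Local Open Scope classical_set_scope.
Local Open Scope ring_scope.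

Theorem lemma4p2 (R : realType) (m : nat) (theta : R) (f : voting_rule R m) :
  (1 <= m)%N -> 0 < theta <= 1 -> homogeneous f ->
  (exists delta : R, 0 < delta /\
     exists eps : R, 0 < eps /\
       forall w : cprofile R m, is_cprofile w -> total_weight w = 1 ->
         pdist w (Phat m theta) < eps -> stable_CM f delta w) ->
  (fun n : nat => rho f n theta) @ \oo --> (1 : R^o).
Proof.
move=> _ /andP[theta_gt0 theta_le1] hom [delta [delta_gt0 [eps [eps_gt0 stable]]]].
have theta01 : 0 <= theta <= 1 by rewrite (ltW theta_gt0) theta_le1.
apply/cvgrPdist_le => e e_gt0; near=> n.
have n_gt0 : (0 < n)%N by near: n; exact: nbhs_infty_gt.
have n_pos : (0 : R) < n%:R by rewrite ltr0n.
have CM_near (P : dprofile m n) :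
    pdist (normalize (counts R P)) (Phat m theta) < eps -> CM_disc f P.
  move=> near_Phat; apply: (CM_disc_of_stable_CM (delta := delta) n_gt0 hom).
    by rewrite -ltr_pdivrMr //; near: n; exact: nbhs_infty_gtr.
  by apply: stable; [exact: is_cprofile_normalize_counts | exact: total_weight_normalize_counts | ].
rewrite ger0_norm ?subr_ge0 ?rho_le1 //.
apply: le_trans (one_sub_rho_le theta01 n_gt0 eps_gt0 CM_near) _.
rewrite ler_pdivrMr ?mulr_gt0 ?exprn_gt0 // mulrCA ltW // -ltr_pdivrMr ?mulr_gt0 ?exprn_gt0 //.
by near: n; exact: nbhs_infty_gtr.
Unshelve. all: end_near.
Qed.
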